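(* Let $d\ge1$ and let $(\boldsymbol X_1,Y_1)=(X_{1,1},\ldots,X_{1,d},Y_1)$ be a random vector with continuous marginals and $(d+1)$-dimensional copula $C_1$. Fix $\boldsymbol\alpha\in[0,1)^d$ with $C_1(\boldsymbol\alpha,1)<1$. If $C_1$ is $\mathrm{LTD}^1_{d+1}$, then for all $\beta\in(0,1)$, $$\mathrm{VaR}_\beta(Y_1)\le\mathrm{VCoVaR}_{\boldsymbol\alpha,\beta}(Y_1|\boldsymbol X_1)\quad\text{and}\quad \mathrm{ES}_\beta(Y_1)\le\mathrm{VCoES}_{\boldsymbol\alpha,\beta}(Y_1|\boldsymbol X_1).$$
   Context: $C(\boldsymbol{\alpha},v)=C(\alpha_1,\ldots,\alpha_d,v)$. $F^{-1}(t)=\inf\{x:F(x)\ge t\}$, $\mathrm{VaR}_t(Z)=F_Z^{-1}(t)$, $\mathrm{ES}_\beta(Z)=\frac1{1-\beta}\int_\beta^1\mathrm{VaR}_t(Z)\,dt$. $\mathrm{VCoVaR}_{\boldsymbol\alpha,t}(Y_1|\boldsymbol X_1)$ is the $t$-quantile of the conditional distribution of $Y_1$ given $\{\exists\, i: X_{1,i}>\mathrm{VaR}_{\alpha_i}(X_{1,i})\}$; $\mathrm{VCoES}_{\boldsymbol\alpha,\beta}(Y_1|\boldsymbol X_1)=\frac1{1-\beta}\int_\beta^1\mathrm{VCoVaR}_{\boldsymbol\alpha,t}(Y_1|\boldsymbol X_1)\,dt$. A $(d+1)$-dimensional copula $C$ is $\mathrm{LTD}^1_{d+1}$ if $C(u_1,\ldots,u_d,v)/v$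 is nonincreasing in $v\in(0,1]$ for all $u_1,\ldots,u_d$ (equivalently, for $(U_1,\ldots,U_d,V)\sim C$, $P(U_1\le u_1,\ldots,U_d\le u_d\mid V\le v)$ is nonincreasing in $v$). *)

From HB Require Import structures.
From mathcomp Require Import all_boot all_order all_algebra.
From mathcomp Require Import all_classical all_reals all_analysis.
Set Implicit Arguments. Unset Strict Implicit. Unset Printing Implicit Defensive.
Import Order.TTheory GRing.Theory Num.Theory.
Local Open Scope classical_set_scope.
Local Open Scope ring_scope.

(* (n+1)-dimensional copula written as C(u_1,...,u_n, v), u : 'I_n -> R. *)
Definition in01 (R : realType) (x : R) := 0 <= x <= 1.

Definition copula (R : realType) (n : nat) (C : ('I_n -> R) -> R -> R) : Prop :=
  (forall u v, (forall i, in01 (u i)) -> in01 v ->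
     ((exists i, u i = 0) \/ v = 0) -> C u v = 0) /\
  (forall v, in01 v -> C (fun _ => 1) v = v) /\
  (forall j x, in01 x -> C (fun i => if i == j then x else 1) 1 = x) /\
  (* (n+1)-increasing: every C-volume of a box in [0,1]^(n+1) is nonnegative *)
  (forall (a b : 'I_n -> R) (av bv : R),
     (forall i, 0 <= a i /\ a i <= b i /\ b i <= 1) ->
     0 <= av -> av <= bv -> bv <= 1 ->
     0 <= \sum_(s : {ffun 'I_n -> bool}) \sum_(e : bool)
            (-1) ^+ (#|[set i | ~~ s i]| + (~~ e))%N *
            C (fun i => if s i then b i else a i) (if e then bv else av)).

Definition LTD1 (R : realType) (n : nat) (C : ('I_n -> R) -> R -> R) : Prop :=
  forall u v1 v2, (forall i, in01 (u i)) -> 0 < v1 -> v1 <= v2 -> v2 <= 1 ->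
    C u v2 / v2 <= C u v1 / v1.

Section risk.
Context {d : measure_display} {T : measurableType d} {R : realType}
  (P : probability T R).
Local Open Scope ereal_scope.

Definition VaR (Z : {RV P >-> R}) (t : R) : \bar R :=
  ereal_inf [set x%:E | x in [set x : R | t%:E <= cdf Z x]].

Definition ES (Z : {RV P >-> R}) (beta : R) : \bar R :=
  ((1 - beta)^-1)%:E *
  \int[lebesgue_measure]_(t in `[beta, 1%R]%classic) VaR Z t.

Definition stress_event (n : nat) (X : 'I_n -> {RV P >-> R}) (alpha : 'I_n -> R)
  : set T := [set w | exists i, VaR (X i) (alpha i) < (X i w)%:E].

Definition cond_cdf (n : nat) (X : 'I_n -> {RV P >-> R}) (alpha : 'I_n -> R)
  (Y : {RV P >-> R}) (y : R) : R :=
  (fine (P (stress_event X alpha `&` [set w | Y w <= y])) /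
   fine (P (stress_event X alpha)))%R.

Definition VCoVaR (n : nat) (X : 'I_n -> {RV P >-> R}) (alpha : 'I_n -> R)
  (Y : {RV P >-> R}) (t : R) : \bar R :=
  ereal_inf [set y%:E | y in [set y : R | (t <= cond_cdf X alpha Y y)%R]].

Definition VCoES (n : nat) (X : 'I_n -> {RV P >-> R}) (alpha : 'I_n -> R)
  (Y : {RV P >-> R}) (beta : R) : \bar R :=
  ((1 - beta)^-1)%:E *
  \int[lebesgue_measure]_(t in `[beta, 1%R]%classic) VCoVaR X alpha Y t.

End risk.

From HB Require Import structures.
From mathcomp Require Import all_boot all_order all_algebra.
From mathcomp Require Import all_classical all_reals all_analysis.
From mathcomp Require Import lra.
Set Implicit Arguments. Unset Strict Implicit. Unset Printing Implicit Defensive.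
Import Order.TTheory GRing.Theory Num.Theory numFieldTopology.Exports numFieldNormedType.Exports.
Local Open Scope classical_set_scope.
Local Open Scope ring_scope.

(* Let B be the lower orthant of X at the quantiles VaR_{alpha_i}(X_i): the
   stress event is the complement of B (or the whole space when some quantile
   is -oo).  By LTD^1, P(B, Y <= y) / F_Y(y) >= P(B, Y <= t) / F_Y(t), and the
   right-hand side tends to P(B) as t -> +oo, so {Y <= y} and B are positively
   correlated.  Hence conditioning on the complement of B lowers the cdf of Y
   pointwise, which raises its quantiles and their tail averages. *)

Lemma le_integral_pointwise (d : measure_display) (T : measurableType d)
  (R : realType) (mu : {measure set T -> \bar R}) (D : set T) (f g : T -> \bar R) :
  {in D, forall x, (f x <= g x)%E} ->
  (\int[mu]_(x in D) f x <= \int[mu]_(x in D) g x)%E.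
Proof.
move=> fg; have fgD : {in setT, forall x, (f \_ D) x <= (g \_ D) x}%E.
  by move=> x _; apply: lee_restrict => y /mem_set; exact: fg.
rewrite /integral; apply: leeB; apply: ereal_sup_le => _ [h hh <-];
  exists h => //= x; apply: le_trans (hh x) _.
- exact: funepos_le fgD _ (in_setT x).
- exact: funeneg_le fgD _ (in_setT x).
Qed.

Section stress_conditioning.
Context (d : measure_display) (T : measurableType d) (R : realType)
  (P : probability T R).

Lemma measurable_RV_le (Z : {RV P >-> R}) z : measurable [set w | Z w <= z].
Proof.
rewrite (_ : [set w | Z w <= z] = Z @^-1` `]-oo, z]); last first.
  by apply/seteqP; split => w /=; rewrite in_itv.
exact: measurable_funPTI.
Qed.

Lemma cdf_fin_num (Z : {RV P >-> R}) z : cdf Z z \is a fin_num.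
Proof. exact: fin_num_measure. Qed.

Lemma fine_probability_le1 (A : set T) : measurable A -> fine (P A) <= 1.
Proof. by move=> mA; rewrite -lee_fin fineK ?fin_num_measure ?probability_le1. Qed.

Lemma cdf_near1 (Z : {RV P >-> R}) (y e : R) : 0 < e ->
  exists2 t, y <= t & 1 - e < fine (cdf Z t).
Proof.
move=> e0; have /fine_cvgP[_ cdf1] := cvg_cdfy1 Z.
have : \forall t \near +oo%R, y <= t /\ 1 - e < fine (cdf Z t).
  near=> t; split; first by near: t; apply: nbhs_pinfty_ge; exact: num_real.
  by near: t; apply: (cvgr_gt _ cdf1); rewrite ltrBlDr ltrDl.
by move/filter_ex => -[t [yt ht]]; exists t.
Unshelve. all: end_near.
Qed.

Lemma VaR_lt_pinfty (Z : {RV P >-> R}) a : a < 1 -> (VaR Z a < +oo)%E.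
Proof.
move=> a1; have [t _ ht] : exists2 t, 0 <= t & 1 - (1 - a) < fine (cdf Z t).
  by apply: cdf_near1; rewrite subr_gt0.
apply: le_lt_trans (ltry t); apply: ereal_inf_lbound; exists t => //=.
by rewrite -(fineK (cdf_fin_num Z t)) lee_fin ltW // -(subKr 1 a).
Qed.

Lemma fine_probability_le_setI_addC (A B : set T) :
  measurable A -> measurable B ->
  fine (P B) <= fine (P (B `&` A)) + (1 - fine (P A)).
Proof.
move=> mA mB; have mBA : measurable (B `\` A) by exact: measurableD.
have PBA : fine (P (B `\` A)) <= 1 - fine (P A).
  rewrite -[1]/(fine 1%E) -fineB ?fin_num_measure // -probability_setC //.
  apply: fine_le; rewrite ?fin_num_measure //; first exact: measurableC.
  by apply: le_measure; rewrite ?inE //; exact: measurableC.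
rewrite (measureDI P mB mA) fineD ?fin_num_measure //; last exact: measurableI.
by rewrite addrC lerD2l.
Qed.

Lemma fine_probability_condC_le (A B : set T) :
  measurable A -> measurable B ->
  fine (P A) * fine (P B) <= fine (P (A `&` B)) ->
  fine (P (~` B `&` A)) / fine (P (~` B)) <= fine (P A).
Proof.
move=> mA mB AB; have PB1 := fine_probability_le1 mB.
have -> : fine (P (~` B `&` A)) = fine (P A) - fine (P (A `&` B)).
  rewrite (measureDI P mA mB) fineD ?fin_num_measure ?addrK //.
    by rewrite setIC setDE.
  - exact: measurableD.
  - exact: measurableI.
rewrite probability_setC // fineB ?fin_num_measure //.
have [->|PBne1] := eqVneq (1 - fine (P B)) 0; first by rewrite invr0 mulr0 fine_ge0.
have PBlt1 : 0 < 1 - fine (P B) by rewrite lt_neqAle eq_sym PBne1 subr_ge0.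
by rewrite ler_pdivrMr //= mulrBr mulr1 lerD2l lerN2.
Qed.

Definition lower_orthant n (X : 'I_n -> {RV P >-> R}) (q : 'I_n -> R) : set T :=
  [set w | forall i, X i w <= q i].

Definition is_copula_of n (X : 'I_n -> {RV P >-> R}) (Y : {RV P >-> R})
    (C : ('I_n -> R) -> R -> R) :=
  forall (x : 'I_n -> R) (y : R),
    fine (P (lower_orthant X x `&` [set w | Y w <= y])) =
    C (fun i => fine (cdf (X i) (x i))) (fine (cdf Y y)).

Lemma measurable_lower_orthant n (X : 'I_n -> {RV P >-> R}) q :
  measurable (lower_orthant X q).
Proof.
rewrite (_ : lower_orthant _ _ = \bigcap_(i in setT) [set w | X i w <= q i]).
  by apply: fin_bigcap_measurable => // i _; exact: measurable_RV_le.
by apply/seteqP; split => w /= Xq i; [move=> _ |]; exact: Xq.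
Qed.

Lemma LTD1_cdf_mul_orthant_le n (X : 'I_n -> {RV P >-> R}) (Y : {RV P >-> R})
    (C : ('I_n -> R) -> R -> R) (q : 'I_n -> R) (y : R) :
  is_copula_of X Y C -> LTD1 C ->
  fine (cdf Y y) * fine (P (lower_orthant X q)) <=
  fine (P (lower_orthant X q `&` [set w | Y w <= y])).
Proof.
move=> XYC ltd; set B := lower_orthant X q; set v := fine (cdf Y y).
pose u i := fine (cdf (X i) (q i)).
have u01 i : in01 (u i).
  by rewrite /in01 fine_ge0 ?fine_probability_le1 //; exact: measurable_RV_le.
have [->|v_neq0] := eqVneq v 0; first by rewrite mul0r fine_ge0.
have v_gt0 : 0 < v by rewrite lt_neqAle eq_sym v_neq0 fine_ge0.
rewrite mulrC -ler_pdivlMr // XYC -/v; apply/ler_addgt0Pr => e e_gt0.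
have [t yt cdf_t] := cdf_near1 Y y e_gt0; set v' := fine (cdf Y t) in cdf_t.
have vv' : v <= v'.
  by apply: fine_le; rewrite ?fin_num_measure //; exact: cdf_nondecreasing.
have v'1 : v' <= 1 by apply: fine_probability_le1; exact: measurable_RV_le.
have v'_gt0 : 0 < v' := lt_le_trans v_gt0 vv'.
(* C u 1 need not be P(B), so P(B) is approached through C u v' with v' -> 1. *)
have Cv' : C u v' <= C u v' / v'.
  rewrite ler_pdivlMr // ler_piMr // -XYC fine_ge0 //.
apply: le_trans (fine_probability_le_setI_addC (measurable_RV_le Y t)
  (measurable_lower_orthant X q)) _.
rewrite XYC -/v'; have := ltd u v v' u01 v_gt0 vv' v'1; lra.
Qed.

Lemma stress_event_VaRNy n (X : 'I_n -> {RV P >-> R}) alpha i :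
  VaR (X i) (alpha i) = -oo%E -> stress_event X alpha = setT.
Proof. by move=> VaRNy; apply/seteqP; split => // w _; exists i; rewrite VaRNy ltNyr. Qed.

Lemma stress_event_fin_num n (X : 'I_n -> {RV P >-> R}) alpha :
  (forall i, VaR (X i) (alpha i) \is a fin_num) ->
  stress_event X alpha = ~` lower_orthant X (fun i => fine (VaR (X i) (alpha i))).
Proof.
move=> VaR_fin; apply/seteqP; split => w /=.
  by move=> [i Xi] Xq; move: Xi; rewrite -(fineK (VaR_fin i)) lte_fin ltNge Xq.
move=> Xq; apply: contrapT => nS; apply: Xq => i.
by rewrite -lee_fin fineK // leNgt; apply/negP => Xi; apply: nS; exists i.
Qed.

Lemma cond_cdf_le_cdf n (X : 'I_n -> {RV P >-> R}) (Y : {RV P >-> R})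
    (C : ('I_n -> R) -> R -> R) (alpha : 'I_n -> R) :
  is_copula_of X Y C -> (forall i, alpha i < 1) -> LTD1 C ->
  forall y, cond_cdf X alpha Y y <= fine (cdf Y y).
Proof.
move=> XYC alpha1 ltd y; rewrite /cond_cdf.
have [[i /stress_event_VaRNy ->]|VaRNy] :=
  pselect (exists i, VaR (X i) (alpha i) = -oo%E).
  by rewrite setTI probability_setT divr1.
rewrite stress_event_fin_num; last first.
  move=> i; rewrite fin_numE -ltey VaR_lt_pinfty // andbT.
  by apply/eqP => VaRi; apply: VaRNy; exists i.
apply: fine_probability_condC_le; [exact: measurable_RV_le|
  exact: measurable_lower_orthant|].
by rewrite setIC; exact: LTD1_cdf_mul_orthant_le.
Qed.

Section cond_cdf_le.
Variables (n : nat) (X : 'I_n -> {RV P >-> R}) (alpha : 'I_n -> R)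
  (Y : {RV P >-> R}).
Hypothesis cond_cdf_le : forall y, cond_cdf X alpha Y y <= fine (cdf Y y).

Lemma VaR_le_VCoVaR t : (VaR Y t <= VCoVaR X alpha Y t)%E.
Proof.
apply: ereal_inf_le_tmp => _ [y t_le <-]; exists y => //=.
by rewrite -(fineK (cdf_fin_num Y y)) lee_fin (le_trans t_le).
Qed.

Lemma ES_le_VCoES beta : beta <= 1 -> (ES Y beta <= VCoES X alpha Y beta)%E.
Proof.
move=> beta1; apply: lee_wpmul2l; first by rewrite lee_fin invr_ge0 subr_ge0.
by apply: le_integral_pointwise => t _; exact: VaR_le_VCoVaR.
Qed.

End cond_cdf_le.

End stress_conditioning.

Theorem corollary4p4 (d : measure_display) (T : measurableType d)
  (R : realType) (P : probability T R) (n : nat) (hn : (0 < n)%N)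
  (X : 'I_n -> {RV P >-> R}) (Y : {RV P >-> R})
  (C : ('I_n -> R) -> R -> R) (alpha : 'I_n -> R) :
  (* continuous marginals *)
  (forall i, continuous (fun x : R => fine (cdf (X i) x))) ->
  continuous (fun y : R => fine (cdf Y y)) ->
  (* C is a copula of (X_1, ..., X_n, Y) *)
  copula C ->
  (forall (x : 'I_n -> R) (y : R),
     fine (P ([set w | forall i, X i w <= x i] `&` [set w | Y w <= y])) =
     C (fun i => fine (cdf (X i) (x i))) (fine (cdf Y y))) ->
  (forall i, 0 <= alpha i < 1) ->
  C alpha 1 < 1 ->
  LTD1 C ->
  forall beta : R, 0 < beta < 1 ->
    (VaR Y beta <= VCoVaR X alpha Y beta)%E /\
    (ES Y beta <= VCoES X alpha Y beta)%E.
Proof.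
move=> _ _ _ XYC alpha01 _ ltd beta /andP[_ beta1].
have alpha1 i : alpha i < 1 by case/andP: (alpha01 i).
have cond_le := cond_cdf_le_cdf XYC alpha1 ltd.
by split; [exact: VaR_le_VCoVaR | exact: ES_le_VCoES (ltW beta1)].
Qed.
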